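(* Under the setting of the static update law $\hat W=\alpha K_{\mathrm b}\beta(e)B^\top Pe$ with $\alpha>0$, $0<K_{\mathrm b}\in\mathrm S^{n_\beta}$, $\mathscr b:=\inf_{x}\beta(x)^\top K_{\mathrm b}\beta(x)>0$, $|\eta(t)|\le\eta^\star$, $0<P,Q\in\mathrm S^n$ with $Q=-(A^\top P+PA)$, fix $\gamma\in[0,1)$ and let $$\bar r=\sqrt{\frac{\lambda_{\max}(P)}{g(\alpha\mathscr b\gamma,Q,PB)\lambda_{\min}(P)}\cdot\frac{W^\top K_{\mathrm b}^{-1}W+\frac{{\eta^\star}^2}{\mathscr b(1-\gamma)}}{\alpha}},\qquad c_{\mathrm e}=\frac{g(\alpha\mathscr b\gamma,Q,PB)}{\lambda_{\max}(P)}.$$ If $\|e(0)\|\ge\bar r$, then for all $t\ge0$ $$\|e(t)\|\le\sqrt{\bar r^{\,2}+e^{-c_{\mathrm e}t}\Big(\frac{\lambda_{\max}(P)}{\lambda_{\min}(P)}\|e(0)\|^2-\bar r^{\,2}\Big)}.$$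
   Context: Error system: $\dot e=Ae+B(u_{\mathrm{adapt}}+W^\top\beta(e)+\eta)$, $u_{\mathrm{adapt}}=-\hat W^\top\beta(e)$, with $A\in\mathbb R^{n\times n}$ Hurwitz, $B\in\mathbb R^n$, $\beta:\mathbb R^n\to\mathbb R^{n_\beta}$ known satisfying Assumption 1 (a non-decreasing $\alpha_\beta$ with $\|\beta(x)\|\le\alpha_\beta(\|x\|)$), $W\in\mathbb R^{n_\beta}$ unknown constant, $\eta(t)\in\mathbb R$. Closed-loop solutions are assumed to exist on $[0,\infty)$. $g(\phi,Q,v)=\lambda_{\min}(Q+\phi\,vv^\top)$; $\mathrm S^k$: real symmetric $k\times k$ matrices. *)

From HB Require Import structures.
From mathcomp Require Import all_boot all_order all_algebra.
From mathcomp Require Import all_classical all_reals all_analysis.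
Set Implicit Arguments. Unset Strict Implicit. Unset Printing Implicit Defensive.
Import Order.TTheory GRing.Theory Num.Theory numFieldNormedType.Exports.
Local Open Scope ring_scope.
Local Open Scope classical_set_scope.

Definition dotv (R : ringType) (n : nat) (u v : 'cV[R]_n) : R := (u^T *m v) 0 0.

Definition enorm (R : rcfType) (n : nat) (x : 'cV[R]_n) : R := Num.sqrt (dotv x x).

Definition symmetricmx (R : ringType) (n : nat) (M : 'M[R]_n) : Prop := M^T = M.

Definition posdefmx (R : numDomainType) (n : nat) (M : 'M[R]_n) : Prop :=
  symmetricmx M /\ forall x : 'cV[R]_n, x != 0 -> 0 < dotv x (M *m x).

Definition lambda_min (R : realType) (n : nat) (M : 'M[R]_n) : R :=
  inf [set a : R | eigenvalue M a].
Definition lambda_max (R : realType) (n : nat) (M : 'M[R]_n) : R :=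
  sup [set a : R | eigenvalue M a].

Definition gfun (R : realType) (n : nat) (phi : R) (Q : 'M[R]_n) (v : 'cV[R]_n) : R :=
  lambda_min (Q + phi *: (v *m v^T)).

(* A is Hurwitz: every complex eigenvalue a + i b of A has a < 0.
   (a + i b is an eigenvalue with eigenvector u + i v, (u,v) <> 0, iff
    A u = a u - b v and A v = b u + a v.) *)
Definition hurwitz (R : realType) (n : nat) (A : 'M[R]_n) : Prop :=
  forall (a b : R) (u v : 'cV[R]_n), (u != 0 \/ v != 0) ->
    A *m u = a *: u - b *: v -> A *m v = b *: u + a *: v -> a < 0.

Definition assumption1 (R : realType) (n nb : nat) (beta : 'cV[R]_n -> 'cV[R]_nb) : Prop :=
  exists alpha_beta : R -> R,
    (forall r s, r <= s -> alpha_beta r <= alpha_beta s) /\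
    forall x, enorm (beta x) <= alpha_beta (enorm x).

Definition bconst (R : realType) (n nb : nat) (Kb : 'M[R]_nb)
  (beta : 'cV[R]_n -> 'cV[R]_nb) : R :=
  inf [set dotv (beta x) (Kb *m beta x) | x in [set: 'cV[R]_n]].

From Pilot Require Import Defs.
From HB Require Import structures.
From mathcomp Require Import all_boot all_order all_algebra.
From mathcomp Require Import all_classical all_reals all_analysis.
From mathcomp Require Import ring lra.
Set Implicit Arguments. Unset Strict Implicit. Unset Printing Implicit Defensive.
Import Order.TTheory GRing.Theory Num.Theory numFieldNormedType.Exports.
Local Open Scope ring_scope.
Local Open Scope classical_set_scope.

(* Along closed-loop solutions, V = e^T P e has derivative
   -e^T Q e + 2 s (-alpha s beta^T Kb beta + W^T beta + eta) with s = B^T P e.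
   Young's inequality in the Kb-metric absorbs W^T beta into half of the damping
   alpha s^2 beta^T Kb beta >= alpha b s^2.  Of what remains, the share gamma joins Q
   into Q + alpha b gamma (P B)(P B)^T, whose least eigenvalue g bounds the quadratic
   part, and the share 1 - gamma absorbs eta by a scalar Young inequality.  Hence
   V' <= -g |e|^2 + M <= -c_e V + M, and the comparison lemma for this linear
   differential inequality, together with lambda_min |e|^2 <= V <= lambda_max |e|^2,
   gives the estimate.  The needed spectral facts are obtained by showing that the
   infimum of the Rayleigh quotient of a symmetric matrix is an eigenvalue. *)

Section DotvBilinear.
Variables (R : comNzRingType) (n : nat).
Implicit Types (u v w : 'cV[R]_n) (M : 'M[R]_n).

Lemma dotvE u v : dotv u v = \sum_i u i 0 * v i 0.
Proof. by rewrite /dotv mxE; apply: eq_bigr => i _; rewrite mxE. Qed.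

Lemma dotvC u v : dotv u v = dotv v u.
Proof. by rewrite !dotvE; apply: eq_bigr => i _; rewrite mulrC. Qed.

Lemma dotvDr u v w : dotv u (v + w) = dotv u v + dotv u w.
Proof. by rewrite /dotv mulmxDr mxE. Qed.

Lemma dotvDl u v w : dotv (u + v) w = dotv u w + dotv v w.
Proof. by rewrite dotvC dotvDr !(dotvC w). Qed.

Lemma dotvZr a u v : dotv u (a *: v) = a * dotv u v.
Proof. by rewrite /dotv -scalemxAr mxE. Qed.

Lemma dotvZl a u v : dotv (a *: u) v = a * dotv u v.
Proof. by rewrite dotvC dotvZr dotvC. Qed.

Lemma dotvNr u v : dotv u (- v) = - dotv u v.
Proof. by rewrite -scaleN1r dotvZr mulN1r. Qed.

Lemma dotvNl u v : dotv (- u) v = - dotv u v.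
Proof. by rewrite dotvC dotvNr dotvC. Qed.

Lemma dotvBr u v w : dotv u (v - w) = dotv u v - dotv u w.
Proof. by rewrite dotvDr dotvNr. Qed.

Lemma dotvBl u v w : dotv (u - v) w = dotv u w - dotv v w.
Proof. by rewrite dotvDl dotvNl. Qed.

Lemma dotv0r u : dotv u 0 = 0.
Proof. by rewrite /dotv mulmx0 mxE. Qed.

Lemma dotv_mulmxl M u v : dotv (M *m u) v = dotv u (M^T *m v).
Proof. by rewrite /dotv trmx_mul mulmxA. Qed.

Lemma dotv_mulmx_sym M u v : M^T = M -> dotv u (M *m v) = dotv v (M *m u).
Proof. by move=> MT; rewrite dotvC dotv_mulmxl MT. Qed.

Lemma dotv_outer u v : dotv u ((v *m v^T) *m u) = dotv v u ^+ 2.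
Proof.
rewrite -mulmxA [v^T *m u]mx11_scalar mul_mx_scalar dotvZr.
by rewrite -/(dotv v u) [dotv u v]dotvC expr2.
Qed.

End DotvBilinear.

Section DotvPositive.
Variables (R : realFieldType) (n : nat).
Implicit Types (u x : 'cV[R]_n) (M N : 'M[R]_n).

Lemma dotv_ge0 u : 0 <= dotv u u.
Proof. by rewrite dotvE sumr_ge0 // => i _; rewrite -expr2 sqr_ge0. Qed.

Lemma dotv_eq0 u : (dotv u u == 0) = (u == 0).
Proof.
apply/idP/eqP => [|->]; last by rewrite dotv0r.
rewrite dotvE psumr_eq0 => [/allP u0|i _]; last by rewrite -expr2 sqr_ge0.
apply/matrixP => i j; rewrite ord1 mxE.
by apply/eqP; rewrite -sqrf_eq0 expr2 (eqP (u0 i (mem_index_enum _))).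
Qed.

Lemma dotv_gt0 u : u != 0 -> 0 < dotv u u.
Proof. by move=> u0; rewrite lt_def dotv_eq0 u0 dotv_ge0. Qed.

Lemma sqr_coord_le_dotv u i : u i 0 ^+ 2 <= dotv u u.
Proof.
rewrite dotvE (bigD1 i) //= -expr2 lerDl sumr_ge0 // => j _.
by rewrite -expr2 sqr_ge0.
Qed.

Definition entry_abs_sum M : R := \sum_i \sum_j `|M i j|.

Lemma entry_abs_sum_ge0 M : 0 <= entry_abs_sum M.
Proof. by rewrite sumr_ge0 // => i _; rewrite sumr_ge0. Qed.

Lemma entry_abs_sumN M : entry_abs_sum (- M) = entry_abs_sum M.
Proof. by apply: eq_bigr => i _; apply: eq_bigr => j _; rewrite mxE normrN. Qed.

Lemma dotv_mulmx_le M x : dotv x (M *m x) <= entry_abs_sum M * dotv x x.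
Proof.
rewrite dotvE mulr_suml; apply: ler_sum => i _.
rewrite mxE mulr_sumr mulr_suml; apply: ler_sum => j _.
have xixj : `|x i 0 * x j 0| <= dotv x x.
  have := sqr_coord_le_dotv x i; have := sqr_coord_le_dotv x j.
  rewrite -!(real_normK (num_real (x _ 0))) normrM.
  have := normr_ge0 (x i 0); have := normr_ge0 (x j 0); nra.
apply: le_trans (ler_norm _) _.
by rewrite mulrCA normrM; apply: ler_wpM2l.
Qed.

Lemma psd_dotv_mulmx_le N x : N^T = N -> (forall z, 0 <= dotv z (N *m z)) ->
  dotv (N *m x) (N *m x) <= (entry_abs_sum N + 1) * dotv x (N *m x).
Proof.
move=> NT Npsd; set y := N *m x; set c := entry_abs_sum N + 1.
have c_gt0 : 0 < c by rewrite ltr_pwDr // entry_abs_sum_ge0.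
(* Nonnegativity of the form at [x - y / c] yields [|y|^2 / c <= x^T N x]. *)
have := Npsd (x - c^-1 *: y).
rewrite mulmxBr -scalemxAr dotvBl !dotvBr !dotvZl !dotvZr.
rewrite -/y [dotv y (N *m x)]/(dotv y y) (dotv_mulmx_sym x y NT) -/(dotv y y).
have := dotv_mulmx_le N y; rewrite -/y -(addrK 1 (entry_abs_sum N)) -/c.
have := dotv_ge0 y; have := Npsd x.
set q := dotv x y; set Y := dotv y y; set Z := dotv y (N *m y).
move=> q_ge0 Y_ge0 ZY form_ge0.
have ci : c^-1 * c = 1 by rewrite mulVf // gt_eqF.
have ci0 : 0 < c^-1 by rewrite invr_gt0.
have Zb : c^-1 * (c^-1 * Z) <= c^-1 * Y - c^-1 * (c^-1 * Y).
  have -> : c^-1 * Y - c^-1 * (c^-1 * Y) = c^-1 * (c^-1 * ((c - 1) * Y)).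
    by field; rewrite gt_eqF.
  by rewrite !ler_pM2l.
have cY_ge0 : 0 <= c^-1 * (c^-1 * Y) by rewrite !mulr_ge0 // ltW.
have qY : c^-1 * Y <= q by lra.
by rewrite -(ler_pM2l ci0) mulrA ci mul1r.
Qed.

Lemma psd_unit_coercive N : N^T = N -> (forall z, 0 <= dotv z (N *m z)) ->
  N \in unitmx -> exists2 K : R, 0 < K & forall x, dotv x x <= K * dotv x (N *m x).
Proof.
move=> NT Npsd Nu; set c1 := entry_abs_sum ((invmx N)^T *m invmx N).
have c1_ge0 : 0 <= c1 := entry_abs_sum_ge0 _.
have c2_ge0 : 0 <= entry_abs_sum N + 1 by rewrite addr_ge0 ?entry_abs_sum_ge0.
exists (c1 * (entry_abs_sum N + 1) + 1); first by rewrite ltr_pwDr // mulr_ge0.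
move=> x; have xE : x = invmx N *m (N *m x) by rewrite mulKmx.
have x_le : dotv x x <= c1 * dotv (N *m x) (N *m x).
  by rewrite {1 2}xE dotv_mulmxl mulmxA dotv_mulmx_le.
have := ler_wpM2l c1_ge0 (psd_dotv_mulmx_le x NT Npsd).
have := Npsd x; lra.
Qed.

End DotvPositive.

Section SymmetricSpectrum.
Variables (R : realType) (n : nat).
Implicit Types (x : 'cV[R]_n) (M : 'M[R]_n).

Lemma eigenvalue_colP M a : M^T = M ->
  reflect (exists2 x : 'cV[R]_n, x != 0 & M *m x = a *: x) (eigenvalue M a).
Proof.
move=> MT; apply: (iffP eigenvalueP) => [[v vM v0]|[x x0 Mx]].
  by exists v^T; rewrite ?trmx_eq0 // -MT -trmx_mul vM linearZ.
by exists x^T; rewrite ?trmx_eq0 // -{1}MT -trmx_mul Mx linearZ.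
Qed.

(* The infimum of the Rayleigh quotient is an eigenvalue: [M - m] is positive
   semidefinite with arbitrarily small Rayleigh quotients, hence singular. *)
Lemma rayleigh_inf_eigenvector M : (0 < n)%N -> M^T = M ->
  exists m, exists2 x0 : 'cV[R]_n, x0 != 0 &
    M *m x0 = m *: x0 /\ (forall x, m * dotv x x <= dotv x (M *m x)).
Proof.
move=> n_gt0 MT.
set S := [set dotv x (M *m x) / dotv x x | x in [set x : 'cV[R]_n | x != 0]].
have S0 : S !=set0.
  pose one : 'cV[R]_n := const_mx 1.
  exists (dotv one (M *m one) / dotv one one); exists one => //=.
  apply/eqP => /matrixP/(_ (Ordinal n_gt0) 0).
  by rewrite !mxE => /eqP; rewrite oner_eq0.
have Slb : has_lbound S.
  exists (- entry_abs_sum M) => _ [x /= x0 <-].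
  rewrite ler_pdivlMr ?dotv_gt0 // mulNr lerNl -dotvNr -mulNmx.
  by rewrite -(entry_abs_sumN M) dotv_mulmx_le.
set m := inf S.
have m_le x : m * dotv x x <= dotv x (M *m x).
  have [->|x0] := eqVneq x 0; first by rewrite mulmx0 !dotv0r mulr0.
  by rewrite -ler_pdivlMr ?dotv_gt0 //; apply: ge_inf => //; exists x.
set N := M - m%:M.
have NE x : dotv x (N *m x) = dotv x (M *m x) - m * dotv x x.
  by rewrite mulmxBl mul_scalar_mx dotvBr dotvZr.
have NT : N^T = N by rewrite linearB /= tr_scalar_mx MT.
have Npsd z : 0 <= dotv z (N *m z) by rewrite NE subr_ge0.
have /det0P[v v0 vN] : \det N == 0.
  apply/negPn/negP => detN.
  have Nu : N \in unitmx by rewrite unitmxE unitfE.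
  have [K K_gt0 coercive] := psd_unit_coercive NT Npsd Nu.
  have Ki_gt0 : 0 < K^-1 by rewrite invr_gt0.
  have [_ [x /= x0 <-] ltxm] := @inf_adherent R S K^-1 Ki_gt0 (conj S0 Slb).
  rewrite ltr_pdivrMr ?dotv_gt0 // -/m in ltxm.
  have KK : K * K^-1 = 1 by rewrite mulfV // gt_eqF.
  have := coercive x; have := dotv_gt0 x0; rewrite NE; nra.
exists m, v^T; first by rewrite trmx_eq0.
split=> //; apply/eqP; rewrite -subr_eq0 -mul_scalar_mx -mulmxBl -/N.
by rewrite -NT -trmx_mul vN trmx0.
Qed.

Lemma lambda_min_rayleigh M : (0 < n)%N -> M^T = M ->
  exists2 x0 : 'cV[R]_n, x0 != 0 &
    M *m x0 = lambda_min M *: x0 /\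
    (forall x, lambda_min M * dotv x x <= dotv x (M *m x)).
Proof.
move=> n_gt0 MT; have [m [x0 x00 [Mx0 m_le]]] := rayleigh_inf_eigenvector n_gt0 MT.
suff -> : lambda_min M = m by exists x0.
have mE : [set a | eigenvalue M a] m by apply/eigenvalue_colP => //; exists x0.
have mlb : lbound [set a | eigenvalue M a] m.
  move=> a /= /(eigenvalue_colP _ MT)[x x0' Mx].
  by have := m_le x; rewrite Mx dotvZr ler_pM2r // dotv_gt0.
by apply/eqP; rewrite eq_le ge_inf ?lb_le_inf //; exists m.
Qed.

Lemma dotv_le_lambda_max M x : M^T = M -> dotv x (M *m x) <= lambda_max M * dotv x x.
Proof.
move=> MT; have [n0|n_gt0] := posnP n.
  suff -> : x = 0 by rewrite mulmx0 !dotv0r mulr0.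
  by apply/matrixP => i; have := ltn_ord i; rewrite {2}n0.
have NT : (- M)^T = - M by rewrite linearN /= MT.
have [m [x0 x00 [Mx0 m_le]]] := rayleigh_inf_eigenvector n_gt0 NT.
have mE : [set a | eigenvalue M a] (- m).
  by apply/eigenvalue_colP => //; exists x0; rewrite // scaleNr -Mx0 mulNmx opprK.
have mub : ubound [set a | eigenvalue M a] (- m).
  move=> a /= /(eigenvalue_colP _ MT)[y y0 My].
  have := m_le y; rewrite mulNmx My dotvNr dotvZr -mulNr ler_pM2r ?dotv_gt0 //.
  by rewrite lerNr.
suff -> : lambda_max M = - m by have := m_le x; rewrite mulNmx dotvNr mulNr lerNr.
by apply/eqP; rewrite eq_le ub_le_sup ?ge_sup //; exists (- m).
Qed.

Lemma lambda_min_le_dotv M x : M^T = M -> lambda_min M * dotv x x <= dotv x (M *m x).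
Proof.
move=> MT; have [n0|n_gt0] := posnP n.
  suff -> : x = 0 by rewrite mulmx0 !dotv0r mulr0.
  by apply/matrixP => i; have := ltn_ord i; rewrite {2}n0.
by have [_ _ [_]] := lambda_min_rayleigh n_gt0 MT; apply.
Qed.

Lemma lambda_min_gt0 M : (0 < n)%N -> posdefmx M -> 0 < lambda_min M.
Proof.
move=> n_gt0 [MT Mpd]; have [x0 x00 [Mx0 _]] := lambda_min_rayleigh n_gt0 MT.
by have := Mpd _ x00; rewrite Mx0 dotvZr pmulr_lgt0 // dotv_gt0.
Qed.

Lemma lambda_min_le_max M : (0 < n)%N -> M^T = M -> lambda_min M <= lambda_max M.
Proof.
move=> n_gt0 MT; have [x0 x00 [Mx0 _]] := lambda_min_rayleigh n_gt0 MT.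
by have := dotv_le_lambda_max x0 MT; rewrite Mx0 dotvZr ler_pM2r // dotv_gt0.
Qed.

Lemma enorm_le_rayleigh M x y r E : M^T = M -> 0 < lambda_min M -> 0 <= E ->
  dotv x (M *m x) <= lambda_min M * r + E * (dotv y (M *m y) - lambda_min M * r) ->
  enorm x <= Num.sqrt (r + E * (lambda_max M / lambda_min M * enorm y ^+ 2 - r)).
Proof.
move=> MT lmin_gt0 E_ge0 xy_le; rewrite /enorm sqr_sqrtr ?dotv_ge0 //.
apply: ler_wsqrtr; rewrite -(ler_pM2l lmin_gt0).
have -> : lambda_min M * (r + E * (lambda_max M / lambda_min M * dotv y y - r))
    = lambda_min M * r + E * (lambda_max M * dotv y y - lambda_min M * r).
  by field; rewrite gt_eqF.
apply: le_trans (lambda_min_le_dotv x MT) (le_trans xy_le _).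
rewrite lerD2l; apply: ler_wpM2l => //.
by rewrite lerD2r dotv_le_lambda_max.
Qed.

End SymmetricSpectrum.

Section PosDef.
Variables (R : realFieldType) (n : nat).
Implicit Types (x : 'cV[R]_n) (K : 'M[R]_n).

Lemma posdefmx_ge0 K x : posdefmx K -> 0 <= dotv x (K *m x).
Proof.
case=> _ Kpd; have [->|x0] := eqVneq x 0; first by rewrite mulmx0 dotv0r.
exact/ltW/Kpd.
Qed.

Lemma posdefmx_unit K : posdefmx K -> K \in unitmx.
Proof.
case=> KT Kpd; rewrite unitmxE unitfE; apply/negP => /det0P[v v0 vK].
have := Kpd v^T; rewrite trmx_eq0 v0 -KT -trmx_mul vK trmx0 dotv0r ltxx.
by move/(_ isT).
Qed.

Lemma dotv_invmx_ge0 K w : posdefmx K -> 0 <= dotv w (invmx K *m w).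
Proof.
move=> Kpd; rewrite -{1}(mulKVmx (posdefmx_unit Kpd) w) dotvC.
exact: posdefmx_ge0.
Qed.

(* Completing the square [0 <= (u - K^-1 w)^T K (u - K^-1 w)]. *)
Lemma dotv_young K u w : posdefmx K ->
  2 * dotv u w <= dotv u (K *m u) + dotv w (invmx K *m w).
Proof.
move=> Kpd; have KT := Kpd.1; have Kw : K *m (invmx K *m w) = w.
  by rewrite mulKVmx // posdefmx_unit.
have := posdefmx_ge0 (u - invmx K *m w) Kpd.
rewrite mulmxBr Kw !dotvBl !dotvBr (dotv_mulmx_sym (invmx K *m w) u KT) Kw.
by rewrite [dotv (invmx K *m w) w]dotvC; lra.
Qed.

End PosDef.

Section PointwiseDerive.
Variable R : realType.

Lemma is_derive_sumr m (h : 'I_m -> R -> R) (t : R) (dh : 'I_m -> R) :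
  (forall i, is_derive t 1 (h i) (dh i)) ->
  is_derive t 1 (fun s => \sum_i h i s) (\sum_i dh i).
Proof. by move=> hD; have := is_derive_sum hD; rewrite fct_sumE. Qed.

Lemma is_deriveMr (f g : R -> R) (t df dg : R) :
  is_derive t 1 f df -> is_derive t 1 g dg ->
  is_derive t 1 (fun s => f s * g s) (f t * dg + g t * df).
Proof. exact: is_deriveM. Qed.

End PointwiseDerive.

Section QuadraticFormCalculus.
Variables (R : realType) (n : nat) (P : 'M[R]_n).

Lemma continuous_quadform : continuous (fun x : 'cV[R]_n => dotv x (P *m x)).
Proof.
have coordC i : continuous (fun x : 'cV[R]_n => x i 0) by move=> x; exact: coord_continuous.
have -> : (fun x : 'cV[R]_n => dotv x (P *m x)) =
    (fun x => \sum_i (x i 0 * \sum_j P i j * x j 0)).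
  by apply/funext => x; rewrite dotvE; apply: eq_bigr => i _; rewrite mxE.
apply: continuous_big => [|i _]; first exact: add_continuous.
move=> x; apply: continuousM; first exact: coordC.
apply: continuous_big => [|j _ y]; first exact: add_continuous.
by apply: continuousM; [exact: cst_continuous | exact: coordC].
Qed.

Lemma is_derive_coord (e : R -> 'cV[R]_n) (t : R) (D : 'cV[R]_n) i :
  is_derive t 1 e D -> is_derive t 1 (fun s => e s i 0) (D i 0).
Proof.
move=> [De <-]; apply: DeriveDef; first exact: (derivable_mxP e t 1).1 De i 0.
by rewrite derive_mx // mxE.
Qed.

Lemma is_derive_quadform (e : R -> 'cV[R]_n) (t : R) (D : 'cV[R]_n) : P^T = P ->
  is_derive t 1 e D ->
  is_derive t 1 (fun s => dotv (e s) (P *m e s)) (2 * dotv (e t) (P *m D)).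
Proof.
move=> PT eD.
have -> : (fun s => dotv (e s) (P *m e s)) =
    (fun s => \sum_i (e s i 0 * \sum_j (P i j * e s j 0))).
  by apply/funext => s; rewrite dotvE; apply: eq_bigr => i _; rewrite mxE.
apply: is_derive_eq.
  apply: is_derive_sumr => i; apply: is_deriveMr; first exact: is_derive_coord.
  apply: is_derive_sumr => j; apply: is_deriveMr; last exact: is_derive_coord.
have -> : 2 * dotv (e t) (P *m D) = dotv (e t) (P *m D) + dotv D (P *m e t).
  by rewrite (dotv_mulmx_sym D _ PT) mulr_natl mulr2n.
rewrite !dotvE -big_split /=; apply: eq_bigr => i _.
by rewrite !mxE; under eq_bigr do rewrite mulr0 addr0; ring.
Qed.

End QuadraticFormCalculus.

Section Comparison.
Variable R : realType.

Lemma is_derive_expR_scale (c s : R) :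
  is_derive s 1 (fun u => expR (c * u)) (expR (c * s) * c).
Proof.
apply: is_derive1_comp.
by have := is_deriveMr (is_derive_cst c s 1) (is_derive_id s 1); rewrite mulr1 mulr0 addr0.
Qed.

(* [exp(c s) (V s - K)] is nonincreasing on [[0, t]]. *)
Lemma linear_differential_inequality (V dV : R -> R) (c K t : R) : 0 <= t ->
  {within `[0, t], continuous V} ->
  (forall s : R, 0 < s -> is_derive s 1 V (dV s)) ->
  (forall s : R, 0 < s -> dV s <= - c * V s + c * K) ->
  V t <= K + expR (- c * t) * (V 0 - K).
Proof.
move=> t_ge0 Vcont VD dVle.
pose h s := expR (c * s) * (V s - K).
have hD (s : R) : 0 < s ->
    is_derive s 1 h (expR (c * s) * dV s + (V s - K) * (expR (c * s) * c)).
  move=> s_gt0; apply: is_deriveMr; first exact: is_derive_expR_scale.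
  by have := is_deriveB (VD s s_gt0) (is_derive_cst K s 1); rewrite subr0.
have hcont : {within `[0, t], continuous h}.
  move=> s; apply: (continuousM (T := subspace `[0, t])
    (s := fun u => expR (c * u)) (t := fun u => V u - K)).
    apply: (continuous_subspaceT (A := `[0, t]) (f := fun u => expR (c * u))) => u.
    by have [] := is_derive_expR_scale c u => /derivable1_diffP/differentiable_continuous.
  by apply: (continuousB (T := subspace `[0, t]) (f := V) (g := cst K));
    [exact: Vcont | exact: cst_continuous].
have htle : h t <= h 0.
  apply: (ler0_derive1_le_cc _ _ hcont); rewrite ?in_itv /= ?lexx ?t_ge0 //.
    by move=> s; rewrite in_itv /= => /andP[s_gt0 _]; have [] := hD s s_gt0.
  move=> s; rewrite in_itv /= => /andP[s_gt0 _].
  rewrite derive1E; have [_ ->] := hD s s_gt0.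
  have := dVle s s_gt0; have := expR_gt0 (c * s); nra.
have expN : expR (- c * t) * expR (c * t) = 1 by rewrite mulNr expRN mulVf // gt_eqF ?expR_gt0.
rewrite -lerBlDl -[V t - K]mul1r -expN -mulrA.
by apply: ler_wpM2l; [exact/ltW/expR_gt0 | rewrite /h mulr0 expR0 mul1r in htle].
Qed.

End Comparison.

Lemma mulr_young (R : realFieldType) (k a b : R) : 0 < k ->
  2 * a * b <= k * a ^+ 2 + b ^+ 2 / k.
Proof.
move=> k_gt0; rewrite -(ler_pM2l k_gt0) mulrDr.
have -> : k * (b ^+ 2 / k) = b ^+ 2 by field; rewrite gt_eqF.
have := sqr_ge0 (k * a - b); nra.
Qed.

Lemma posdefmx_add_outer (R : realFieldType) n (Q : 'M[R]_n) (v : 'cV[R]_n) phi :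
  posdefmx Q -> 0 <= phi -> posdefmx (Q + phi *: (v *m v^T)).
Proof.
move=> [QT Qpd] phi_ge0; split.
  by rewrite /Defs.symmetricmx linearD linearZ /= trmx_mul trmxK QT.
move=> x x0; rewrite mulmxDl -scalemxAl dotvDr dotvZr dotv_outer.
by rewrite ltr_wpDr ?Qpd // mulr_ge0 ?sqr_ge0.
Qed.

Lemma bconst_le (R : realType) n nb (Kb : 'M[R]_nb) (beta : 'cV[R]_n -> 'cV[R]_nb) x :
  posdefmx Kb -> bconst Kb beta <= dotv (beta x) (Kb *m beta x).
Proof.
move=> Kbpd; apply: ge_inf; last by exists x.
by exists 0 => _ [y _ <-]; exact: posdefmx_ge0.
Qed.

Section StaticUpdateLaw.
Variables (R : realType) (n nb : nat) (A : 'M[R]_n) (B : 'cV[R]_n).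
Variables (beta : 'cV[R]_n -> 'cV[R]_nb) (W : 'cV[R]_nb) (alpha : R) (Kb : 'M[R]_nb).
Variables (P Q : 'M[R]_n).
Hypotheses (PT : P^T = P) (QE : Q = - (A^T *m P + P *m A)).

Definition static_law_field (x : 'cV[R]_n) (d : R) : 'cV[R]_n :=
  A *m x + (- dotv ((alpha * dotv B (P *m x)) *: (Kb *m beta x)) (beta x)
            + dotv W (beta x) + d) *: B.

Lemma static_law_power x d :
  let sB := dotv B (P *m x) in
  2 * dotv x (P *m static_law_field x d) =
  - dotv x (Q *m x) +
    2 * sB * (- alpha * sB * dotv (beta x) (Kb *m beta x) + dotv W (beta x) + d).
Proof.
move=> sB; rewrite mulmxDr -scalemxAr dotvDr dotvZr (dotv_mulmx_sym x B PT) -/sB.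
have -> : dotv x (P *m (A *m x)) = - dotv x (Q *m x) / 2.
  have APx : dotv x ((A^T *m P) *m x) = dotv x (P *m (A *m x)).
    by rewrite -mulmxA -dotv_mulmxl (dotv_mulmx_sym _ _ PT).
  by rewrite QE mulNmx mulmxDl dotvNr dotvDr APx -mulmxA; field.
rewrite dotvZl [dotv (Kb *m beta x) (beta x)]dotvC.
by field.
Qed.

Lemma static_law_Q_sym : Q^T = Q.
Proof. by rewrite QE linearN linearD /= !trmx_mul trmxK PT addrC. Qed.

Variables (etastar gamma : R).
Hypotheses (alpha_gt0 : 0 < alpha) (Kbpd : posdefmx Kb) (b_gt0 : 0 < bconst Kb beta).
Hypothesis gamma_lt1 : gamma < 1.

Lemma static_law_dissipation x d : `|d| <= etastar ->
  2 * dotv x (P *m static_law_field x d) <=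
  - (gfun (alpha * bconst Kb beta * gamma) Q (P *m B) * dotv x x) +
  (dotv W (invmx Kb *m W) + etastar ^+ 2 / (bconst Kb beta * (1 - gamma))) / alpha.
Proof.
move=> d_le; rewrite static_law_power.
set sB := dotv B (P *m x); set b := dotv (beta x) (Kb *m beta x).
set w := dotv W (beta x); set wK := dotv W (invmx Kb *m W).
set bb := bconst Kb beta; set phi := alpha * bb * gamma.
set k := alpha * (1 - gamma) * bb.
have k_gt0 : 0 < k by rewrite !mulr_gt0 // subr_gt0.
have gle : gfun phi Q (P *m B) * dotv x x <= dotv x (Q *m x) + phi * sB ^+ 2.
  have GT : (Q + phi *: ((P *m B) *m (P *m B)^T))^T = Q + phi *: ((P *m B) *m (P *m B)^T).
    by rewrite linearD linearZ /= trmx_mul trmxK static_law_Q_sym.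
  have := lambda_min_le_dotv x GT.
  by rewrite mulmxDl -scalemxAl dotvDr dotvZr dotv_outer dotv_mulmxl PT.
have young_w : 2 * sB * w <= alpha * sB ^+ 2 * b + wK / alpha.
  have := dotv_young ((alpha * sB) *: beta x) W Kbpd.
  rewrite -scalemxAr !dotvZl dotvZr [dotv (beta x) W]dotvC -/b -/w -/wK => yw.
  rewrite -(ler_pM2l alpha_gt0) mulrDr.
  have -> : alpha * (wK / alpha) = wK by field; rewrite gt_eqF.
  lra.
have young_d : 2 * sB * d <= k * sB ^+ 2 + etastar ^+ 2 / k.
  apply: le_trans (mulr_young sB d k_gt0) _; rewrite lerD2l ler_pM2r ?invr_gt0 //.
  by rewrite -real_normK ?num_real // lerXn2r ?nnegrE // (le_trans _ d_le).
have bb_le : alpha * sB ^+ 2 * bb <= alpha * sB ^+ 2 * b.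
  by rewrite ler_wpM2l ?bconst_le // mulr_ge0 ?sqr_ge0 // ltW.
have kE : k * sB ^+ 2 = alpha * sB ^+ 2 * bb - phi * sB ^+ 2 by rewrite /k /phi; ring.
have ME : (wK + etastar ^+ 2 / (bb * (1 - gamma))) / alpha = wK / alpha + etastar ^+ 2 / k.
  by rewrite /k; field; rewrite !gt_eqF // subr_gt0.
rewrite ME; lra.
Qed.

Lemma static_law_decay_rate c x d : `|d| <= etastar -> 0 <= c ->
  c * lambda_max P <= gfun (alpha * bconst Kb beta * gamma) Q (P *m B) ->
  2 * dotv x (P *m static_law_field x d) <= - c * dotv x (P *m x) +
  (dotv W (invmx Kb *m W) + etastar ^+ 2 / (bconst Kb beta * (1 - gamma))) / alpha.
Proof.
move=> d_le c_ge0 c_le; apply: le_trans (static_law_dissipation x d_le) _.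
rewrite lerD2r (mulNr c) lerN2 (le_trans _ (ler_wpM2r (dotv_ge0 x) c_le)) //.
by rewrite -mulrA ler_wpM2l // dotv_le_lambda_max.
Qed.

End StaticUpdateLaw.

Unset Implicit Arguments.

Theorem mainTheorem5 (R : realType) (n nb : nat)
  (A : 'M[R]_n) (B : 'cV[R]_n) (beta : 'cV[R]_n -> 'cV[R]_nb) (W : 'cV[R]_nb)
  (alpha : R) (Kb : 'M[R]_nb) (etastar : R) (P Q : 'M[R]_n) (gamma : R)
  (eta : R -> R) (e : R -> 'cV[R]_n) :
  hurwitz A ->
  assumption1 beta ->
  0 < alpha ->
  posdefmx Kb ->
  0 < bconst Kb beta ->
  posdefmx P -> posdefmx Q ->
  Q = - (A^T *m P + P *m A) ->
  0 <= gamma < 1 ->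
  (forall t, 0 <= t -> `|eta t| <= etastar) ->
  {within [set t : R | 0 <= t], continuous e} ->
  (forall t, 0 < t ->
     let What := (alpha * dotv B (P *m e t)) *: (Kb *m beta (e t)) in
     let uadapt := - dotv What (beta (e t)) in
     is_derive t 1 e
       (A *m e t + (uadapt + dotv W (beta (e t)) + eta t) *: B)) ->
  let g := gfun (alpha * bconst Kb beta * gamma) Q (P *m B) in
  let rbar := Num.sqrt ((lambda_max P / (g * lambda_min P)) *
       ((dotv W (invmx Kb *m W) + etastar ^+ 2 / (bconst Kb beta * (1 - gamma)))
        / alpha)) in
  let ce := g / lambda_max P in
  enorm (e 0) >= rbar ->
  forall t, 0 <= t ->
    enorm (e t) <= Num.sqrt (rbar ^+ 2 + expR (- ce * t) *
        (lambda_max P / lambda_min P * enorm (e 0) ^+ 2 - rbar ^+ 2)).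
Proof.
move=> _ _ alpha_gt0 Kbpd b_gt0 Ppd Qpd QE /andP[gamma_ge0 gamma_lt1] eta_le e_cont e_ode.
move=> g rbar ce _ t t_ge0.
have [n0|n_gt0] := posnP n.
  by subst n; rewrite /enorm dotvE big_ord0 sqrtr0 sqrtr_ge0.
have PT := Ppd.1; set lmin := lambda_min P; set lmax := lambda_max P.
have lmin_gt0 : 0 < lmin := lambda_min_gt0 n_gt0 Ppd.
have lmax_gt0 : 0 < lmax := lt_le_trans lmin_gt0 (lambda_min_le_max n_gt0 PT).
have g_gt0 : 0 < g.
  by apply: lambda_min_gt0 n_gt0 (posdefmx_add_outer _ Qpd _); rewrite !mulr_ge0 // ltW.
set M := (dotv W (invmx Kb *m W) + etastar ^+ 2 / (bconst Kb beta * (1 - gamma))) / alpha.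
have M_ge0 : 0 <= M.
  have bg_gt0 : 0 < bconst Kb beta * (1 - gamma) by rewrite mulr_gt0 // subr_gt0.
  by rewrite divr_ge0 ?addr_ge0 ?dotv_invmx_ge0 ?divr_ge0 ?sqr_ge0 // ltW.
have rbar2 : rbar ^+ 2 = lmax / (g * lmin) * M.
  by rewrite sqr_sqrtr // mulr_ge0 // divr_ge0 ?ltW // mulr_gt0.
have ceKc : ce * (lmin * rbar ^+ 2) = M by rewrite rbar2 /ce -/lmax; field; rewrite !gt_eqF.
pose V s := dotv (e s) (P *m e s).
have Vt : V t <= lmin * rbar ^+ 2 + expR (- ce * t) * (V 0 - lmin * rbar ^+ 2).
  pose f s := static_law_field A B beta W alpha Kb P (e s) (eta s).
  apply: (linear_differential_inequality (dV := fun s => 2 * dotv (e s) (P *m f s)))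
    => // [|s s_gt0|s s_gt0].
  - have e_cont0t : {within `[0, t], continuous e}.
      by apply: continuous_subspaceW e_cont => s /=; rewrite in_itv /= => /andP[].
    by move=> s; exact: (continuous_comp (e_cont0t s) (@continuous_quadform R n P (e s))).
  - exact: is_derive_quadform PT (e_ode s s_gt0).
  - rewrite ceKc; apply: (static_law_decay_rate W PT QE alpha_gt0 Kbpd b_gt0 gamma_lt1).
    + exact: eta_le (ltW s_gt0).
    + by rewrite divr_ge0 ?ltW.
    + by rewrite /ce mulfVK // gt_eqF.
exact: enorm_le_rayleigh PT lmin_gt0 (ltW (expR_gt0 _)) Vt.
Qed.
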